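(* Let $\bar\nu\in\Pi_{2,SR}$ be an essentially proper policy of player II in a finite-space SSP game (as in the context) satisfying the Finite-Space SSP Game Model Assumption. Then the single-player problem $\mathrm{SSP}_{\bar\nu}$ satisfies the SSP Model Assumption: there exists a proper policy among its stationary deterministic policies, and every improper stationary deterministic policy incurs infinite cost for at least one initial state.
   Context: Finite-space game: $S=\{1,\dots,n\}$, $S_o=S\cup\{0\}$, $0$ absorbing cost-free termination state. At $i\in S$ players I and II have finite control sets $U(i),V(i)$; under $(u,v)$ the state moves to $j\in S_o$ w.p. $p_{ij}(u,v)$ with transition cost $\hat g(i,u,v,j)$ paid by player I; $g(i,u,v)$ is the expected one-stage cost. $J(i;\pi_1,\pi_2)=\liminf_{t\to\infty}E_{\pi_1\pi_2}[\sum_{k=0}^t\hat g(i_k,u_k,v_k,i_{k+1})\mid i_0=i]$. $\Pi_{1,SR},\Pi_{2,SR}$: stationary randomized policies ($\mu(\cdot\mid i)\in\mathcal P(U(i))$, $\nu(\cdot\mid i)\in\mathcal P(V(i))$). Prolonging pair: for some initial state the termination state is with positive probability never reached; non-prolonging otherwise. $\nu\in\Pi_{2,SR}$ is essentially proper if some $\mu\in\Pi_{1,SR}$ makes $(\mu,\nu)$ non-prolonging and every $\mu\in\Pi_{1,SR}$ with $(\mu,\nu)$ prolonging has $J(i;\mu,\nu)=+\infty$ for some $i$. Finite-Space SSP Game Model Assumption: (i) there is $\bar\mu\in\Pi_{1,SR}$ with $J(i;\bar\mu,\nu)<+\infty$ for all $\nu\in\Pi_{2,SR}$, all $i$; (ii)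 there is $\bar\nu\in\Pi_{2,SR}$ with $J(i;\mu,\bar\nu)>-\infty$ for all $\mu$, all $i$; (iii) every prolonging pair in $\Pi_{1,SR}\times\Pi_{2,SR}$ has $J(i;\mu,\nu)\in\{\pm\infty\}$ for some $i$. $R=\{(i,u,v):i\in S,u\in U(i),v\in V(i)\}$. $\mathrm{SSP}_{\bar\nu}$ is the single-player (player I, cost-minimizing) problem with state space $S_o\cup R$ and cost-free termination state $0$: from $\ell=(i,u,v)\in R$ the system moves (uncontrolled) to $j\in S_o$ w.p. $p_{ij}(u,v)$ with expected one-stage cost $g(i,u,v)$; at $i\in S$ the control set is $U(i)$ and control $u$ moves the system to $j\in S_o$ w.p. $p_{\bar\nu,ij}(u)=\sum_{v\in V(i)}\bar\nu(v\mid i)p_{ij}(u,v)$ with expected one-stage cost $g_{\bar\nu}(i,u)=\sum_{v}\bar\nu(v\mid i)g(i,u,v)$. A policy of a single-player SSP is proper if under it the termination state is reached w.p.1 from every initial state, and improper otherwise; costs of policies are total expected costs (liminf of expected partial sums). *)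

From HB Require Import structures.
From mathcomp Require Import all_boot all_order all_algebra.
From mathcomp Require Import all_classical all_reals.
From mathcomp Require Import ereal topology normedtype sequences.
Set Implicit Arguments.
Unset Strict Implicit.
Unset Printing Implicit Defensive.
Import Order.TTheory GRing.Theory Num.Theory.
Import numFieldNormedType.Exports.
Local Open Scope ring_scope.
Local Open Scope classical_set_scope.

(* Non-terminal states: finType X; the termination state 0 is implicit  *)
(* (absorbing, cost free).  Q x y = probability to move from x to y in  *)
(* X (the missing mass goes to termination), c x = expected one-stage   *)
(* cost at x.                                                           *)
Section Chain.
Variables (R : realType) (X : finType) (Q : X -> X -> R) (c : X -> R).

Fixpoint Qpow (k : nat) (x y : X) : R :=
  match k with
  | 0 => (x == y)%:R
  | k.+1 => \sum_(z : X) Qpow k x z * Q z y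
  end.

Definition not_term (x : X) (k : nat) : R := \sum_(y : X) Qpow k x y.

Definition chain_proper : Prop :=
  forall x : X, not_term x @ \oo --> (0 : R)%R.

Definition partial_cost (x : X) (t : nat) : R :=
  \sum_(k < t.+1) \sum_(y : X) Qpow k x y * c y.

Definition chain_cost (x : X) : \bar R :=
  limn_einf (fun t => (partial_cost x t)%:E).

End Chain.

(* Finite-space SSP game.  S = 'I_n (states 1..n relabelled 0..n-1),   *)
(* S_o = option 'I_n with None the termination state 0.                 *)
Record game (R : realType) := Game {
  gn : nat;
  gU : finType;
  gV : finType;
  Uad : 'I_gn -> {set gU};
  Vad : 'I_gn -> {set gV};
  gp : 'I_gn -> gU -> gV -> option 'I_gn -> R;
  ghat : 'I_gn -> gU -> gV -> option 'I_gn -> R;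
}.

Section Game.
Variables (R : realType) (G : game R).
Local Notation n := (gn G).
Local Notation U := (gU G).
Local Notation V := (gV G).

Definition game_wf : Prop :=
  forall i : 'I_n,
    (Uad i != finset.set0) /\ (Vad i != finset.set0) /\
    forall u v, u \in Uad i -> v \in Vad i ->
      (forall j, 0 <= gp i u v j) /\ \sum_(j : option 'I_n) gp i u v j = 1.

Definition g1 (i : 'I_n) (u : U) (v : V) : R :=
  \sum_(j : option 'I_n) gp i u v j * ghat i u v j.

Definition pol1_SR (mu : 'I_n -> U -> R) : Prop :=
  forall i, (forall u, 0 <= mu i u) /\ (forall u, u \notin Uad i -> mu i u = 0)
            /\ \sum_(u in Uad i) mu i u = 1.
Definition pol2_SR (nu : 'I_n -> V -> R) : Prop :=
  forall i, (forall v, 0 <= nu i v) /\ (forall v, v \notin Vad i -> nu i v = 0)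
            /\ \sum_(v in Vad i) nu i v = 1.

Definition pairQ (mu : 'I_n -> U -> R) (nu : 'I_n -> V -> R) (i j : 'I_n) : R :=
  \sum_(u in Uad i) \sum_(v in Vad i) mu i u * nu i v * gp i u v (Some j).
Definition pairc (mu : 'I_n -> U -> R) (nu : 'I_n -> V -> R) (i : 'I_n) : R :=
  \sum_(u in Uad i) \sum_(v in Vad i) mu i u * nu i v * g1 i u v.

Definition Jgame mu nu (i : 'I_n) : \bar R := chain_cost (pairQ mu nu) (pairc mu nu) i.

Definition prolonging mu nu : Prop := ~ chain_proper (pairQ mu nu).

Definition ess_proper (nu : 'I_n -> V -> R) : Prop :=
  pol2_SR nu /\
  (exists mu, pol1_SR mu /\ ~ prolonging mu nu) /\
  (forall mu, pol1_SR mu -> prolonging mu nu -> exists i, Jgame mu nu i = +oo%E).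

Definition game_model_assumption : Prop :=
  (exists mub, pol1_SR mub /\
     forall nu, pol2_SR nu -> forall i, (Jgame mub nu i < +oo)%E) /\
  (exists nub, pol2_SR nub /\
     forall mu, pol1_SR mu -> forall i, (-oo < Jgame mu nub i)%E) /\
  (forall mu nu, pol1_SR mu -> pol2_SR nu -> prolonging mu nu ->
     exists i, Jgame mu nu i = +oo%E \/ Jgame mu nu i = -oo%E).

Definition triple_ok (x : 'I_n * U * V) : bool :=
  (x.1.2 \in Uad x.1.1) && (x.2 \in Vad x.1.1).
Definition Rtrip : finType := {x : 'I_n * U * V | triple_ok x}.

Definition Xnu : finType := ('I_n + Rtrip)%type.

(* stationary deterministic policies of SSP_nubar: a control u in U(i) at
   each i in S (states of R are uncontrolled) *)
Definition pol_SD (mu : 'I_n -> U) : Prop := forall i, mu i \in Uad i.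

Definition p_nu (nub : 'I_n -> V -> R) (i : 'I_n) (u : U) (j : option 'I_n) : R :=
  \sum_(v in Vad i) nub i v * gp i u v j.
Definition g_nu (nub : 'I_n -> V -> R) (i : 'I_n) (u : U) : R :=
  \sum_(v in Vad i) nub i v * g1 i u v.

Definition nuQ (nub : 'I_n -> V -> R) (mu : 'I_n -> U) (x y : Xnu) : R :=
  match x, y with
  | inl i, inl j => p_nu nub i (mu i) (Some j)
  | inr l, inl j => gp (val l).1.1 (val l).1.2 (val l).2 (Some j)
  | _, inr _ => 0
  end.
Definition nuc (nub : 'I_n -> V -> R) (mu : 'I_n -> U) (x : Xnu) : R :=
  match x with
  | inl i => g_nu nub i (mu i)
  | inr l => g1 (val l).1.1 (val l).1.2 (val l).2
  end.

Definition SSPnu_proper nub mu : Prop := chain_proper (nuQ nub mu).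
Definition SSPnu_cost nub mu (x : Xnu) : \bar R := chain_cost (nuQ nub mu) (nuc nub mu) x.

Definition SSPnu_model_assumption (nub : 'I_n -> V -> R) : Prop :=
  (exists mu, pol_SD mu /\ SSPnu_proper nub mu) /\
  (forall mu, pol_SD mu -> ~ SSPnu_proper nub mu ->
     exists x : Xnu, SSPnu_cost nub mu x = +oo%E).

End Game.

Arguments g1 {R} G i u v.
Arguments pol1_SR {R} G mu.
Arguments pol2_SR {R} G nu.
Arguments pairQ {R} G mu nu i j.
Arguments pairc {R} G mu nu i.
Arguments Jgame {R} G mu nu i.
Arguments prolonging {R} G mu nu.
Arguments ess_proper {R} G nu.
Arguments pol_SD {R} G mu.
Arguments p_nu {R} G nub i u j.
Arguments g_nu {R} G nub i u.
Arguments nuQ {R} G nub mu x y.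
Arguments nuc {R} G nub mu x.
Arguments SSPnu_proper {R} G nub mu.
Arguments SSPnu_cost {R} G nub mu x.
Arguments SSPnu_model_assumption {R} G nub.

From HB Require Import structures.
From mathcomp Require Import all_boot all_order all_algebra.
From mathcomp Require Import all_classical all_reals.
From mathcomp Require Import ereal topology normedtype sequences.
From mathcomp Require Import lra.
Set Implicit Arguments.
Unset Strict Implicit.
Unset Printing Implicit Defensive.
Import Order.TTheory GRing.Theory Num.Theory.
Import numFieldNormedType.Exports.
Local Open Scope ring_scope.
Local Open Scope classical_set_scope.

(* A finite chain terminates almost surely iff it admits a nonnegative W with
   a + QW <= W for some a > 0 (W bounds a times the expected termination time).
   Under a proper randomized policy of player I against nubar, such a W exists;
   at each state the mixed step a + QW <= W is an average over controls, so some
   single control already satisfies it, which yields a proper deterministic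
   policy of SSP_nubar.  Conversely, from a state of S the chain of SSP_nubar
   under a deterministic policy mu is the game chain under the pure policy mu,
   while the states of R are left after one step; hence if mu is improper, so is
   the pair (mu, nubar), and essential properness gives an infinite cost. *)

Section ChainTheory.
Variables (R : realType) (X : finType) (Q : X -> X -> R).

Definition lyapunov (a : R) (W : X -> R) : Prop :=
  (forall x, 0 <= W x) /\ forall x, a + \sum_y Q x y * W y <= W x.

Lemma sum_Qpow0 (f : X -> R) x : \sum_y Qpow Q 0 x y * f y = f x.
Proof.
rewrite (bigD1 x) //= eqxx mul1r big1 ?addr0 // => y /negPf.
by rewrite eq_sym => ->; rewrite mul0r.
Qed.

Lemma sum_QpowS (f : X -> R) k x :
  \sum_y Qpow Q k.+1 x y * f y = \sum_y Qpow Q k x y * \sum_z Q y z * f z.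
Proof.
rewrite /= (eq_bigr (fun z => \sum_y Qpow Q k x y * Q y z * f z)); last first.
  by move=> z _; rewrite big_distrl.
rewrite exchange_big /=; apply: eq_bigr => y _.
by rewrite big_distrr; apply: eq_bigr => z _; rewrite /= mulrA.
Qed.

Lemma QpowSl k x y : Qpow Q k.+1 x y = \sum_z Q x z * Qpow Q k z y.
Proof.
elim: k x y => [|k IHk] x y.
  transitivity (Q x y); first exact: (sum_Qpow0 (Q^~ y)).
  rewrite (bigD1 y) //= eqxx mulr1 big1 ?addr0 // => z.
  by move=> /negPf ->; rewrite mulr0.
rewrite (_ : Qpow Q k.+2 x y = \sum_z Qpow Q k.+1 x z * Q z y) //.
rewrite (eq_bigr (fun z => \sum_w Q x w * Qpow Q k w z * Q z y)); last first.
  by move=> z _; rewrite IHk big_distrl.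
rewrite exchange_big /=; apply: eq_bigr => w _.
by rewrite big_distrr; apply: eq_bigr => z _; rewrite /= mulrA.
Qed.

Lemma not_term0 x : not_term Q x 0 = 1.
Proof.
transitivity (\sum_y Qpow Q 0 x y * 1); last exact: sum_Qpow0.
by under eq_bigr do rewrite mulr1.
Qed.

Lemma not_termS x k : not_term Q x k.+1 = \sum_y Q x y * not_term Q y k.
Proof.
rewrite /not_term (eq_bigr _ (fun y _ => QpowSl k x y)) exchange_big /=.
by apply: eq_bigr => y _; rewrite big_distrr.
Qed.

Hypothesis Q_ge0 : forall x y, 0 <= Q x y.

Lemma Qpow_ge0 k x y : 0 <= Qpow Q k x y.
Proof.
elim: k x y => [|k IHk] x y /=; first by rewrite ler0n.
by apply: sumr_ge0 => z _; rewrite mulr_ge0.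
Qed.

Lemma not_term_ge0 x k : 0 <= not_term Q x k.
Proof. by apply: sumr_ge0 => y _; apply: Qpow_ge0. Qed.

Lemma lyapunov_proper a W : 0 < a -> lyapunov a W -> chain_proper Q.
Proof.
move=> a_gt0 [W_ge0 W_step] x.
have bound m : a * \sum_(k < m) not_term Q x k + \sum_y Qpow Q m x y * W y <= W x.
  elim: m => [|m IHm]; first by rewrite big_ord0 mulr0 add0r sum_Qpow0.
  apply: le_trans IHm; rewrite big_ord_recr /= mulrDr -addrA lerD2l sum_QpowS.
  rewrite /not_term big_distrr -big_split /=; apply: ler_sum => y _.
  by rewrite mulrC -mulrDr ler_wpM2l ?Qpow_ge0.
apply: cvg_series_cvg_0; apply: nondecreasing_is_cvgn.
  apply/nondecreasing_seqP => m; rewrite /series /= big_nat_recr //=.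
  by rewrite lerDl not_term_ge0.
exists (W x / a) => _ [m _ <-]; rewrite /series /= big_mkord.
rewrite ler_pdivlMr // mulrC; apply: le_trans (bound m).
by rewrite lerDl; apply: sumr_ge0 => y _; rewrite mulr_ge0 ?Qpow_ge0.
Qed.

Lemma proper_lyapunov : chain_proper Q -> exists W, lyapunov 2^-1 W.
Proof.
move=> Qproper.
have : \forall k \near \oo, forall x, `|0 - not_term Q x k| < 2^-1.
  apply: filter_forall => x; move/cvgrPdist_lt: (Qproper x).
  by apply; rewrite invr_gt0.
case=> M _ /(_ M (leqnn M)) M_small.
have {}M_small x : not_term Q x M <= 2^-1.
  by move: (M_small x); rewrite sub0r normrN => /ltW; apply: le_trans (ler_norm _).
exists (fun x => \sum_(k < M) not_term Q x k); split=> [x|x].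
  by apply: sumr_ge0 => k _; apply: not_term_ge0.
(* W x is the expected number of steps before termination or time M. *)
have telescope : 1 + \sum_y Q x y * \sum_(k < M) not_term Q y k =
    \sum_(k < M) not_term Q x k + not_term Q x M.
  rewrite -(big_ord_recr M (fun k : 'I_M.+1 => not_term Q x k)) /= big_ord_recl /=.
  rewrite not_term0; congr (_ + _).
  under eq_bigr do rewrite big_distrr.
  by rewrite exchange_big /=; apply: eq_bigr => k _; rewrite not_termS.
move: telescope (M_small x); lra.
Qed.

End ChainTheory.

Section NeverEnteredBlock.
Variables (R : realType) (X Y : finType).
Variables (Q : X + Y -> X + Y -> R) (P : X -> X -> R).
Hypothesis Q_inr : forall z y, Q z (inr y) = 0.
Hypothesis Q_inl : forall x x', Q (inl x) (inl x') = P x x'.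

Lemma Qpow_inl k x :
  (forall x', Qpow Q k (inl x) (inl x') = Qpow P k x x') /\
  (forall y, Qpow Q k (inl x) (inr y) = 0).
Proof.
elim: k => [|k [IHl IHr]]; first by [].
split=> [x'|y]; rewrite [LHS]/= big_sumType /=.
  rewrite [X in _ + X]big1 ?addr0 => [|y _]; last by rewrite IHr mul0r.
  by apply: eq_bigr => z _; rewrite IHl Q_inl.
by rewrite !big1 ?addr0 // => z _; rewrite Q_inr mulr0.
Qed.

Lemma chain_cost_inl (c : X + Y -> R) x :
  chain_cost Q c (inl x) = chain_cost P (c \o inl) x.
Proof.
rewrite /chain_cost /partial_cost; congr limn_einf; apply: funext => t.
congr EFin; apply: eq_bigr => k _; have [Ql Qr] := Qpow_inl k x.
rewrite big_sumType /= [X in _ + X]big1 ?addr0 => [|y _]; last by rewrite Qr mul0r.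
by apply: eq_bigr => x' _; rewrite Ql.
Qed.

Lemma lyapunov_inl a W : 0 <= a -> (forall z x, 0 <= Q z (inl x)) ->
  lyapunov P a W -> exists W', lyapunov Q a W'.
Proof.
move=> a_ge0 Q_ge0 [W_ge0 W_step].
exists (fun z => match z with
  | inl x => W x
  | inr y => a + \sum_x Q (inr y) (inl x) * W x end).
have step z : a + \sum_w Q z w * (match w with
    | inl x => W x | inr y => a + \sum_x Q (inr y) (inl x) * W x end) =
    a + \sum_x Q z (inl x) * W x.
  by rewrite big_sumType /= [X in _ + (_ + X)]big1 ?addr0 // => y _; rewrite Q_inr mul0r.
split=> [[x|y]|[x|y]] //; rewrite ?step //.
- by rewrite addr_ge0 //; apply: sumr_ge0 => x _; rewrite mulr_ge0.
- by apply: le_trans (W_step x); under eq_bigr do rewrite Q_inl.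
Qed.

End NeverEnteredBlock.

Lemma exists_le_avg (R : realFieldType) (T : finType) (A : {set T}) (w F : T -> R) :
  (forall u, 0 <= w u) -> \sum_(u in A) w u = 1 ->
  exists2 u, u \in A & F u <= \sum_(u in A) w u * F u.
Proof.
move=> w_ge0 w_sum1.
have [u0 u0A] : exists u0, u0 \in A.
  apply/set0Pn/eqP => A0; move/eqP: w_sum1.
  by rewrite A0 big_set0 eq_sym oner_eq0.
have [u uA u_min] := @arg_minP _ _ _ u0 (mem A) F u0A.
exists u => //; rewrite -[leLHS]mul1r -w_sum1 big_distrl /=.
by apply: ler_sum => u' u'A; rewrite ler_wpM2l ?u_min.
Qed.

Section PureStrategies.
Variables (R : realType) (G : game R) (nub : 'I_(gn G) -> gV G -> R).
Hypothesis G_wf : game_wf G.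
Hypothesis nubP : pol2_SR G nub.
Local Notation n := (gn G).

Lemma gp_ge0 i u v j : u \in Uad i -> v \in Vad i -> 0 <= @gp _ G i u v j.
Proof. by move=> uA vA; have [_ [_ /(_ u v uA vA) []]] := G_wf i. Qed.

Lemma p_nu_ge0 i u j : u \in Uad i -> 0 <= p_nu G nub i u j.
Proof.
move=> uA; apply: sumr_ge0 => v vA.
by rewrite mulr_ge0 ?gp_ge0 //; case: (nubP i).
Qed.

Lemma pairQ_ge0 mu : pol1_SR G mu -> forall i j, 0 <= pairQ G mu nub i j.
Proof.
move=> muP i j; apply: sumr_ge0 => u uA; apply: sumr_ge0 => v vA.
by rewrite !mulr_ge0 ?gp_ge0 //; [case: (muP i) | case: (nubP i)].
Qed.

Lemma sum_pairQ mu i (W : 'I_n -> R) :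
  \sum_j pairQ G mu nub i j * W j =
  \sum_(u in Uad i) mu i u * \sum_j p_nu G nub i u (Some j) * W j.
Proof.
under eq_bigr => j _ do rewrite /pairQ big_distrl.
rewrite exchange_big /=; apply: eq_bigr => u _.
rewrite big_distrr; apply: eq_bigr => j _ /=.
rewrite /p_nu !big_distrl big_distrr /=; apply: eq_bigr => v _.
by rewrite !mulrA.
Qed.

Lemma nuQ_ge0 mu : pol_SD G mu -> forall x y, 0 <= nuQ G nub mu x y.
Proof.
move=> muP [i|[[[i u] v] /andP[uA vA]]] [j|l] //=; first exact: p_nu_ge0.
exact: gp_ge0.
Qed.

Lemma nuQ_inr mu x l : nuQ G nub mu x (inr l) = 0.
Proof. by case: x. Qed.

Section Pure.
Variable mu : 'I_n -> gU G.
Hypothesis muP : pol_SD G mu.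

Definition pure_policy (i : 'I_n) (u : gU G) : R := (u == mu i)%:R.

Lemma sum_pure_policy i (F : gU G -> R) :
  \sum_(u in Uad i) pure_policy i u * F u = F (mu i).
Proof.
rewrite (bigD1 (mu i)) ?muP //= /pure_policy eqxx mul1r big1 ?addr0 //.
by move=> u /andP[_ /negPf ->]; rewrite mul0r.
Qed.

Lemma pure_policy_SR : pol1_SR G pure_policy.
Proof.
move=> i; split; first by move=> u; rewrite ler0n.
split=> [u uA|]; first by rewrite /pure_policy; case: eqP uA => // ->; rewrite muP.
transitivity (\sum_(u in Uad i) pure_policy i u * 1); last exact: sum_pure_policy.
by apply: eq_bigr => u _; rewrite mulr1.
Qed.

Lemma pairQ_pure i j : pairQ G pure_policy nub i j = p_nu G nub i (mu i) (Some j).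
Proof.
rewrite -(sum_pure_policy i (fun u => p_nu G nub i u (Some j))).
by apply: eq_bigr => u _; rewrite big_distrr; apply: eq_bigr => v _; rewrite /= mulrA.
Qed.

Lemma pairc_pure i : pairc G pure_policy nub i = g_nu G nub i (mu i).
Proof.
rewrite -(sum_pure_policy i (g_nu G nub i)).
by apply: eq_bigr => u _; rewrite big_distrr; apply: eq_bigr => v _; rewrite /= mulrA.
Qed.

Lemma nuQ_inl i j : nuQ G nub mu (inl i) (inl j) = pairQ G pure_policy nub i j.
Proof. by rewrite pairQ_pure. Qed.

Lemma SSPnu_cost_pure i : SSPnu_cost G nub mu (inl i) = Jgame G pure_policy nub i.
Proof.
rewrite /SSPnu_cost (chain_cost_inl (@nuQ_inr mu) nuQ_inl) /Jgame.
by congr chain_cost; apply: funext => j /=; rewrite pairc_pure.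
Qed.

Lemma lyapunov_pure_SSPnu_proper a W : 0 < a ->
  lyapunov (pairQ G pure_policy nub) a W -> SSPnu_proper G nub mu.
Proof.
move=> a_gt0 /(lyapunov_inl (@nuQ_inr mu) nuQ_inl (ltW a_gt0)).
case=> [z x|W' W'_lyap]; first exact: nuQ_ge0.
exact: (lyapunov_proper (nuQ_ge0 muP) a_gt0 W'_lyap).
Qed.

Lemma pure_proper_SSPnu_proper :
  chain_proper (pairQ G pure_policy nub) -> SSPnu_proper G nub mu.
Proof.
move=> /(proper_lyapunov (pairQ_ge0 pure_policy_SR)) [W W_lyap].
by apply: lyapunov_pure_SSPnu_proper W_lyap; rewrite invr_gt0.
Qed.

End Pure.

Lemma lyapunov_purify mu a W : pol1_SR G mu -> lyapunov (pairQ G mu nub) a W ->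
  exists2 mud, pol_SD G mud & lyapunov (pairQ G (pure_policy mud) nub) a W.
Proof.
move=> muP [W_ge0 W_step].
pose F i u := \sum_j p_nu G nub i u (Some j) * W j.
have best i : exists u, u \in Uad i /\ F i u <= \sum_(u in Uad i) mu i u * F i u.
  have [mu_ge0 [_ mu_sum1]] := muP i.
  by have [u uA Fu] := exists_le_avg (F i) mu_ge0 mu_sum1; exists u.
have [mud mudP] := choice best.
have mudSD : pol_SD G mud by move=> i; case: (mudP i).
exists mud => //; split=> // i; apply: le_trans (W_step i).
by rewrite lerD2l !sum_pairQ (sum_pure_policy mudSD); case: (mudP i).
Qed.

End PureStrategies.

Theorem lemma4p2 (R : realType) (G : game R) (nubar : 'I_(gn G) -> gV G -> R) :
  game_wf G -> game_model_assumption G -> ess_proper G nubar ->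
  SSPnu_model_assumption G nubar.
Proof.
move=> G_wf _ [nubP [proper_pair prolonging_infinite]]; split.
  have [mu [muP mu_proper]] := proper_pair.
  have /(proper_lyapunov (pairQ_ge0 G_wf nubP muP)) [W W_lyap] :
    chain_proper (pairQ G mu nubar) by apply: contrapT.
  have [mud mudP mud_lyap] := lyapunov_purify muP W_lyap.
  exists mud; split=> //.
  by apply: (lyapunov_pure_SSPnu_proper G_wf nubP mudP _ mud_lyap); rewrite invr_gt0.
move=> mu muP mu_improper.
have prolong : prolonging G (pure_policy mu) nubar.
  by move=> /(pure_proper_SSPnu_proper G_wf nubP muP).
have [i Ji] := prolonging_infinite _ (pure_policy_SR muP) prolong.
by exists (inl i); rewrite SSPnu_cost_pure.
Qed.
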